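(* Let $I\subset\mathbb R$ be an open interval, let $f:I\to\mathbb R$ be continuous and bounded from below, and let $g:\mathrm{Im}(f)\to\mathbb R$ be continuous. The following are equivalent: (1) $f''\le g(f)$ in the viscosity sense on $I$, i.e., for every $x\in I$ and every smooth $\varphi$ defined in a neighborhood of $x$ such that $\varphi-f$ has a local maximum at $x$, one has $\varphi''(x)\le g(f(x))$; (2) $f''\le g(f)$ in the sense of distributions on $I$, i.e., $\int f\varphi''\,dx\le\int g(f)\varphi\,dx$ for every $\varphi\in C^\infty_c(I)$ with $\varphi\ge0$; (3) $\overline D^2f(x)\le g(f(x))$ for every $x\in I$.
   Context: $\overline D^2f(x)=\limsup_{h\to0^+}\frac{f(x+h)+f(x-h)-2f(x)}{h^2}$. *)

From Stdlib Require Import Reals.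
From Coquelicot Require Import Coquelicot.
Open Scope R_scope.

Definition in_open_interval (a b : Rbar) (x : R) : Prop :=
  Rbar_lt a x /\ Rbar_lt x b.

Definition image_on (a b : Rbar) (f : R -> R) (y : R) : Prop :=
  exists x, in_open_interval a b x /\ y = f x.

Definition smooth_near (phi : R -> R) (x r : R) : Prop :=
  forall (n : nat) (y : R), Rabs (y - x) < r -> ex_derive_n phi n y.

Definition smooth (phi : R -> R) : Prop :=
  forall (n : nat) (y : R), ex_derive_n phi n y.

Definition sym_quot2 (f : R -> R) (x h : R) : R :=
  (f (x + h) + f (x - h) - 2 * f x) / (h ^ 2).

(* Upper second symmetric derivative:
   limsup_{h -> 0+} (f(x+h)+f(x-h)-2f(x))/h^2
   = inf_{delta>0} sup_{0<h<delta} sym_quot2 f x h   (an extended real). *)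
Definition upper_D2 (f : R -> R) (x : R) : Rbar :=
  Rbar_glb (fun y : Rbar => exists delta : R, 0 < delta /\
     y = Lub_Rbar (fun z : R => exists h : R, 0 < h < delta /\ z = sym_quot2 f x h)).

Definition viscosity_sub (a b : Rbar) (f g : R -> R) : Prop :=
  forall (x : R) (phi : R -> R), in_open_interval a b x ->
    (exists r, 0 < r /\ smooth_near phi x r) ->
    (exists r, 0 < r /\ forall y, Rabs (y - x) < r -> phi y - f y <= phi x - f x) ->
    Derive_n phi 2 x <= g (f x).

(* (2) f'' <= g(f) in the sense of distributions on I: for every nonnegative
   phi in C_c^infinity(I) (support contained in [c,d] with [c,d] inside I),
   int f phi'' <= int g(f) phi. *)
Definition distrib_sub (a b : Rbar) (f g : R -> R) : Prop :=
  forall (phi : R -> R) (c d : R),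
    Rbar_lt a c -> c <= d -> Rbar_lt d b ->
    smooth phi ->
    (forall y, (y < c \/ d < y) -> phi y = 0) ->
    (forall y, 0 <= phi y) ->
    RInt (fun t => f t * Derive_n phi 2 t) c d <= RInt (fun t => g (f t) * phi t) c d.

Definition symD2_sub (a b : Rbar) (f g : R -> R) : Prop :=
  forall x, in_open_interval a b x -> Rbar_le (upper_D2 f x) (Finite (g (f x))).

(* All three conditions are equivalent to the pointwise bound [sym_quot2_sub]:
   for every [x] and [eps > 0], [(f (x + t) + f (x - t) - 2 f x) / t^2] is at
   most [g (f x) + eps] for small [t > 0].  As [g o f] is continuous, near [x]
   one compares [f] with parabolas [A u^2/2], [A] slightly above [g (f x)]: the
   bound says that [w = f - A u^2/2] has nonpositive second differences.
   - Viscosity to bound: if [w] had a positive second difference on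
     [[y - s, y + s]], then [w] minus its chord would have an interior minimum
     [z], where a parabola of curvature [A > g (f z)] touches [f] from below.
   - Bound to viscosity: Taylor's formula for the test function.
   - Bound to distributions: the chord argument makes the bound uniform on
     compact sets, and [int f phi''] is the limit of
     [int f (Delta_s phi) / s^2 = int (Delta_s f) / s^2 * phi].
   - Distributions to bound: test against smoothed tents [psi]; [psi''] is a
     second difference of bumps, so [int w psi''] is nearly a positive multiple
     of the second difference of [w], while [int psi = int u^2/2 psi''] turns the
     weak inequality into [int w psi'' <= 0]. *)

From Stdlib Require Import Reals Lra Classical FunctionalExtensionality.
From Coquelicot Require Import Coquelicot.
Open Scope R_scope.

Ltac solve_abs := repeat split_Rabs; lra.

Lemma exists_pos_lt4 (d1 d2 d3 d4 : R) : 0 < d1 -> 0 < d2 -> 0 < d3 -> 0 < d4 ->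
  exists t, 0 < t /\ t < d1 /\ t < d2 /\ t < d3 /\ t < d4.
Proof.
  intros H1 H2 H3 H4. exists (Rmin (Rmin d1 d2) (Rmin d3 d4) / 2).
  generalize (Rmin_pos _ _ (Rmin_pos _ _ H1 H2) (Rmin_pos _ _ H3 H4))
    (Rmin_l (Rmin d1 d2) (Rmin d3 d4)) (Rmin_r (Rmin d1 d2) (Rmin d3 d4))
    (Rmin_l d1 d2) (Rmin_r d1 d2) (Rmin_l d3 d4) (Rmin_r d3 d4).
  lra.
Qed.

Lemma locally_of_ball (P : R -> Prop) x r :
  0 < r -> (forall y, Rabs (y - x) < r -> P y) -> locally x P.
Proof. intros Hr H. exists (mkposreal r Hr). intros y Hy. apply H, Hy. Qed.

Lemma continuous_eps_delta (F : R -> R) x : continuous F x ->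
  forall eps, 0 < eps ->
  exists d, 0 < d /\ forall y, Rabs (y - x) < d -> Rabs (F y - F x) < eps.
Proof.
  intros Hc eps He.
  destruct (proj1 (filterlim_locally F (F x)) Hc (mkposreal eps He)) as [[d Hd] Hball].
  exists d. split; [exact Hd|]. intros y Hy. apply (Hball y Hy).
Qed.

Lemma in_open_interval_ball a b x : in_open_interval a b x ->
  exists r, 0 < r /\ forall y, Rabs (y - x) <= r -> in_open_interval a b y.
Proof.
  intros [Ha Hb].
  assert (exists r1, 0 < r1 /\ forall y, Rabs (y - x) <= r1 -> Rbar_lt a y) as [r1 [Hr1 H1]].
  { destruct a as [a| |]; simpl in *; [|contradiction|].
    - exists ((x - a) / 2). split; [lra|]. intros y Hy. simpl. solve_abs.
    - exists 1. split; [lra|]. intros. exact I. }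
  assert (exists r2, 0 < r2 /\ forall y, Rabs (y - x) <= r2 -> Rbar_lt y b) as [r2 [Hr2 H2]].
  { destruct b as [b| |]; simpl in *; [| |contradiction].
    - exists ((b - x) / 2). split; [lra|]. intros y Hy. simpl. solve_abs.
    - exists 1. split; [lra|]. intros. exact I. }
  exists (Rmin r1 r2). split; [now apply Rmin_pos|].
  intros y Hy. split.
  - apply H1. eapply Rle_trans; [exact Hy|apply Rmin_l].
  - apply H2. eapply Rle_trans; [exact Hy|apply Rmin_r].
Qed.

Lemma in_open_interval_between a b p q z :
  in_open_interval a b p -> in_open_interval a b q -> p <= z <= q ->
  in_open_interval a b z.
Proof.
  intros [Hp _] [_ Hq] Hz. split.
  - eapply Rbar_lt_le_trans; [exact Hp|]. simpl; lra.
  - eapply Rbar_le_lt_trans; [|exact Hq]. simpl; lra.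
Qed.

Lemma continuous_comp_image (a b : Rbar) (f g : R -> R) x :
  (forall x, in_open_interval a b x -> continuous f x) ->
  (forall y, image_on a b f y ->
     filterlim g (within (image_on a b f) (locally y)) (locally (g y))) ->
  in_open_interval a b x -> continuous (fun t => g (f t)) x.
Proof.
  intros Hf Hg Hx.
  eapply filterlim_comp; [|apply (Hg (f x)); now exists x].
  intros P HP. unfold filtermap.
  destruct (in_open_interval_ball _ _ _ Hx) as [r [Hr Hball]].
  assert (HI : locally x (fun t => in_open_interval a b t)).
  { apply (locally_of_ball _ _ r Hr). intros y Hy. apply Hball. lra. }
  assert (Hfx := Hf x Hx _ HP). unfold filtermap in Hfx.
  generalize (filter_and _ _ Hfx HI).
  apply filter_imp. intros t [Ht HtI]. apply Ht. now exists t.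
Qed.

(** * Symmetric second difference quotients *)

Lemma sym_quot2_sub_affine (w : R -> R) al be x t : 0 < t ->
  sym_quot2 (fun u => w u - (al * u + be)) x t = sym_quot2 w x t.
Proof. intros Ht. unfold sym_quot2. field. lra. Qed.

Lemma sym_quot2_sub_half_sq (f : R -> R) A x t : 0 < t ->
  sym_quot2 (fun u => f u - A * u ^ 2 / 2) x t = sym_quot2 f x t - A.
Proof. intros Ht. unfold sym_quot2. field. lra. Qed.

Lemma sym_quot2_le_of_local_max_sub (phi f : R -> R) x r t : 0 < t < r ->
  (forall y, Rabs (y - x) < r -> phi y - f y <= phi x - f x) ->
  sym_quot2 phi x t <= sym_quot2 f x t.
Proof.
  intros Ht Hmax. unfold sym_quot2, Rdiv.
  apply Rmult_le_compat_r; [left; apply Rinv_0_lt_compat, pow_lt; lra|].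
  assert (phi (x + t) - f (x + t) <= phi x - f x) by (apply Hmax; solve_abs).
  assert (phi (x - t) - f (x - t) <= phi x - f x) by (apply Hmax; solve_abs).
  lra.
Qed.

Lemma sym_quot2_nonneg_of_local_min (v : R -> R) x r t : 0 < t < r ->
  (forall y, Rabs (y - x) < r -> v x <= v y) -> 0 <= sym_quot2 v x t.
Proof.
  intros Ht Hmin. unfold sym_quot2.
  assert (v x <= v (x + t)) by (apply Hmin; solve_abs).
  assert (v x <= v (x - t)) by (apply Hmin; solve_abs).
  apply Rdiv_le_0_compat; [lra|apply pow_lt; lra].
Qed.

(* Taylor-Lagrange at order 1 on both sides of [x]. *)
Lemma sym_quot2_Taylor (phi : R -> R) x r t : 0 < t < r ->
  (forall n y, Rabs (y - x) < r -> ex_derive_n phi n y) ->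
  exists z1 z2, Rabs (z1 - x) < t /\ Rabs (z2 - x) < t /\
    sym_quot2 phi x t = (Derive_n phi 2 z1 + Derive_n phi 2 z2) / 2.
Proof.
  intros Ht Hs.
  assert (L : forall s n, Rabs (s - x) <= t ->
             locally s (fun y => forall k, (k <= n)%nat -> ex_derive_n phi k y)).
  { intros s n Hsx. apply (locally_of_ball _ _ (r - t)); [lra|].
    intros y Hy k _. apply Hs. solve_abs. }
  destruct (Taylor_Lagrange phi 1 x (x + t)) as [z1 [Hz1 E1]]; [lra|..].
  { intros s Hsx k _. apply Hs. solve_abs. }
  destruct (Taylor_Lagrange (fun y => phi (- y)) 1 (- x) (- x + t)) as [z [Hz E2]]; [lra|..].
  { intros s Hsx k Hk. apply ex_derive_n_comp_opp. apply L. solve_abs. }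
  simpl sum_f_R0 in E2.
  change (Derive (fun y => phi (- y)) (- x)) with (Derive_n (fun y => phi (- y)) 1 (- x)) in E2.
  rewrite (Derive_n_comp_opp phi 2 z) in E2 by (apply L; solve_abs).
  rewrite (Derive_n_comp_opp phi 1 (- x)) in E2 by (apply L; solve_abs).
  exists z1, (- z). split; [solve_abs|]. split; [solve_abs|].
  unfold sym_quot2. simpl in E1, E2. rewrite Ropp_involutive in E2.
  replace (- (- x + t)) with (x - t) in E2 by ring.
  replace (x + t - x) with t in E1 by ring.
  replace (- x + t - - x) with t in E2 by ring.
  rewrite E1, E2. simpl. field. lra.
Qed.

Definition sym_quot2_limsup_le (f : R -> R) (x c : R) : Prop :=
  forall eps, 0 < eps ->
  exists d, 0 < d /\ forall t, 0 < t < d -> sym_quot2 f x t <= c + eps.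

Definition sym_quot2_sub (a b : Rbar) (f g : R -> R) : Prop :=
  forall x, in_open_interval a b x -> sym_quot2_limsup_le f x (g (f x)).

Lemma upper_D2_le_iff (f : R -> R) x c :
  Rbar_le (upper_D2 f x) (Finite c) <-> sym_quot2_limsup_le f x c.
Proof.
  unfold upper_D2.
  set (Sup := fun d => Lub_Rbar (fun z : R => exists h : R, 0 < h < d /\ z = sym_quot2 f x h)).
  set (S := fun y : Rbar => exists d : R, 0 < d /\ y = Sup d).
  change (Rbar_le (Rbar_glb S) (Finite c) <-> sym_quot2_limsup_le f x c).
  destruct (proj2_sig (Rbar_ex_glb S)) as [Hlb Hglb]. fold (Rbar_glb S) in Hlb, Hglb.
  assert (HSup : forall d t, 0 < t < d -> Rbar_le (sym_quot2 f x t) (Sup d)).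
  { intros d t Ht. apply (proj1 (Lub_Rbar_correct _)). now exists t. }
  split.
  - intros Hle eps He.
    destruct (classic (exists y, S y /\ Rbar_lt y (c + eps))) as [[y [[d [Hd ->]] Hy]]|Hn].
    + exists d. split; [exact Hd|]. intros t Ht.
      assert (Rbar_lt (sym_quot2 f x t) (c + eps)) by (eapply Rbar_le_lt_trans; eauto).
      simpl in *. lra.
    + exfalso.
      assert (Hl : Rbar_is_lower_bound S (c + eps)).
      { intros y Hy. apply Rbar_not_lt_le. intros Hlt. apply Hn. now exists y. }
      assert (H := Rbar_le_trans _ _ _ (Hglb _ Hl) Hle). simpl in H. lra.
  - intros H.
    assert (Hall : forall eps, 0 < eps -> Rbar_le (Rbar_glb S) (c + eps)).
    { intros eps He. destruct (H eps He) as [d [Hd Hd']].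
      eapply Rbar_le_trans; [apply Hlb; now exists d|].
      apply (proj2 (Lub_Rbar_correct _)). intros z [t [Ht ->]]. simpl. now apply Hd'. }
    destruct (Rbar_glb S) as [r| |].
    + simpl. apply Rnot_lt_le. intros Hlt.
      assert (Hq := Hall ((r - c) / 2) ltac:(lra)). simpl in Hq. lra.
    + exact (Hall 1 Rlt_0_1).
    + exact I.
Qed.

Lemma symD2_sub_iff (a b : Rbar) (f g : R -> R) :
  symD2_sub a b f g <-> sym_quot2_sub a b f g.
Proof.
  split; intros H x Hx; now apply upper_D2_le_iff, H.
Qed.

(* Subtract the chord through the endpoints: if the quotient were positive,
   the minimum over [y - s, y + s] would be attained inside. *)
Lemma sym_quot2_nonpos_of_no_affine_touching (w : R -> R) y s : 0 < s ->
  (forall z, y - s <= z <= y + s -> continuous w z) ->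
  (forall z al be, y - s < z < y + s ->
     ~ exists r, 0 < r /\
       forall u, Rabs (u - z) < r -> w z - (al * z + be) <= w u - (al * u + be)) ->
  sym_quot2 w y s <= 0.
Proof.
  intros Hs Hc Hno. apply Rnot_lt_le. intros Hpos.
  assert (Hs2 : 0 < s ^ 2) by (apply pow_lt; lra).
  assert (Hnum : w (y + s) + w (y - s) - 2 * w y > 0).
  { unfold sym_quot2 in Hpos. apply Rnot_le_lt. intros Hle.
    assert ((w (y + s) + w (y - s) - 2 * w y) / s ^ 2 <= 0); [|lra].
    unfold Rdiv. apply Rmult_le_0_r; [lra|]. left. now apply Rinv_0_lt_compat. }
  set (al := (w (y + s) - w (y - s)) / (2 * s)).
  set (be := w (y - s) - al * (y - s)).
  set (v := fun u => w u - (al * u + be)).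
  assert (Hv1 : v (y - s) = 0) by (unfold v, be; ring).
  assert (Hv2 : v (y + s) = 0) by (unfold v, be, al; field; lra).
  assert (Hv3 : v y = w y - (w (y + s) + w (y - s)) / 2) by (unfold v, be, al; field; lra).
  destruct (continuity_ab_min v (y - s) (y + s)) as [z [Hmin Hz]]; [lra|..].
  { intros u Hu. apply continuity_pt_filterlim. unfold v.
    apply (continuous_minus w (fun u => al * u + be)); [now apply Hc|].
    apply (ex_derive_continuous (fun u => al * u + be)). auto_derive. exact I. }
  assert (Hzin : y - s < z < y + s).
  { assert (v z <= v y) by (apply Hmin; lra).
    destruct Hz as [[Hz1|Hz1] [Hz2|Hz2]]; subst; split; lra. }
  apply (Hno z al be Hzin). exists (Rmin (z - (y - s)) (y + s - z)).
  split; [apply Rmin_pos; lra|].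
  intros u Hu. apply Rmin_Rgt in Hu. apply Hmin. solve_abs.
Qed.

Lemma sym_quot2_nonpos_of_locally_neg (w : R -> R) y s : 0 < s ->
  (forall z, y - s <= z <= y + s -> continuous w z) ->
  (forall z, y - s < z < y + s ->
     exists d, 0 < d /\ forall t, 0 < t < d -> sym_quot2 w z t < 0) ->
  sym_quot2 w y s <= 0.
Proof.
  intros Hs Hc Hneg. apply sym_quot2_nonpos_of_no_affine_touching; [exact Hs|exact Hc|].
  intros z al be Hz [r [Hr Hmin]].
  destruct (Hneg z Hz) as [d [Hd Hd']].
  destruct (exists_pos_lt4 d r d r Hd Hr Hd Hr) as [t [Ht [Htd [Htr _]]]].
  assert (Hv := sym_quot2_nonneg_of_local_min (fun u => w u - (al * u + be)) z r t
                  (conj Ht Htr) Hmin).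
  rewrite sym_quot2_sub_affine in Hv by exact Ht.
  assert (sym_quot2 w z t < 0) by (apply Hd'; lra).
  lra.
Qed.

(** * Viscosity subsolutions *)

Lemma Derive_n_S_of_is_derive (K F : R -> R) : (forall x, is_derive K x (F x)) ->
  forall n x, Derive_n K (S n) x = Derive_n F n x.
Proof.
  intros H n. induction n as [|n IH]; intros x.
  - apply is_derive_unique, H.
  - apply Derive_ext, IH.
Qed.

Lemma ex_derive_n_S_of_is_derive (K F : R -> R) : (forall x, is_derive K x (F x)) ->
  forall n x, ex_derive_n F n x -> ex_derive_n K (S n) x.
Proof.
  intros H [|n] x HF; [now exists (F x)|].
  apply (ex_derive_ext (Derive_n F n)); [|exact HF].
  intros t. symmetry. now apply Derive_n_S_of_is_derive.
Qed.

Lemma smooth_of_is_derive (K F : R -> R) :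
  (forall x, is_derive K x (F x)) -> smooth F -> smooth K.
Proof.
  intros H HF [|n] x; [exact I|]. now apply (ex_derive_n_S_of_is_derive K F).
Qed.

Lemma smooth_Derive_n_continuous (F : R -> R) n x : smooth F -> continuous (Derive_n F n) x.
Proof. intros H. apply (ex_derive_continuous (Derive_n F n)), (H (S n)). Qed.

Lemma smooth_plus (F G : R -> R) : smooth F -> smooth G -> smooth (fun x => F x + G x).
Proof. intros HF HG n x. apply ex_derive_n_plus; apply filter_forall; auto. Qed.

Lemma smooth_minus (F G : R -> R) : smooth F -> smooth G -> smooth (fun x => F x - G x).
Proof. intros HF HG n x. apply ex_derive_n_minus; apply filter_forall; auto. Qed.

Lemma smooth_scal (k : R) (F : R -> R) : smooth F -> smooth (fun x => k * F x).
Proof. intros HF n x. apply ex_derive_n_scal_l, HF. Qed.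

Lemma smooth_shift (F : R -> R) p : smooth F -> smooth (fun x => F (x - p)).
Proof. intros HF n x. apply (ex_derive_n_comp_trans F n x (- p)), HF. Qed.

Definition quadratic (A al be u : R) : R := A * u ^ 2 / 2 + (al * u + be).

Lemma is_derive_quadratic A al be x : is_derive (quadratic A al be) x (A * x + al).
Proof. unfold quadratic. auto_derive; [exact I|field]. Qed.

Lemma smooth_quadratic A al be : smooth (quadratic A al be).
Proof.
  apply (smooth_of_is_derive _ _ (is_derive_quadratic A al be)).
  apply (smooth_of_is_derive _ (fun _ => A)); [|intros n x; apply ex_derive_n_const].
  intros x. auto_derive; [exact I|ring].
Qed.

Lemma Derive_n_quadratic_2 A al be x : Derive_n (quadratic A al be) 2 x = A.
Proof.
  rewrite (Derive_n_S_of_is_derive _ _ (is_derive_quadratic A al be)).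
  apply is_derive_unique. auto_derive; [exact I|ring].
Qed.

Lemma continuous_half_sq_sub (f : R -> R) A x :
  continuous f x -> continuous (fun u => f u - A * u ^ 2 / 2) x.
Proof.
  intros Hf. apply (continuous_minus f (fun u => A * u ^ 2 / 2)); [exact Hf|].
  apply ex_derive_continuous. auto_derive. exact I.
Qed.

Section Viscosity.

Variables (a b : Rbar) (f g : R -> R).
Hypothesis f_cont : forall x, in_open_interval a b x -> continuous f x.
Hypothesis gf_cont : forall x, in_open_interval a b x -> continuous (fun t => g (f t)) x.

(* Where an affine function touches [f - A u^2/2] from below at [z], the
   parabola [quadratic A al be] touches [f] from below, so the viscosity
   inequality gives [A <= g (f z)]. *)
Lemma viscosity_sub_sym_quot2_sub : viscosity_sub a b f g -> sym_quot2_sub a b f g.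
Proof.
  intros Hv x0 Hx0 eps He.
  destruct (continuous_eps_delta _ x0 (gf_cont x0 Hx0) eps He) as [d [Hd Hgf]].
  destruct (in_open_interval_ball _ _ _ Hx0) as [r [Hr HI]].
  exists (Rmin d r). split; [now apply Rmin_pos|].
  intros t [Ht Htdr]. apply Rmin_Rgt in Htdr. destruct Htdr as [Htd Htr].
  set (A := g (f x0) + eps).
  enough (sym_quot2 (fun u => f u - A * u ^ 2 / 2) x0 t <= 0) as Hq.
  { rewrite sym_quot2_sub_half_sq in Hq by exact Ht. lra. }
  apply sym_quot2_nonpos_of_no_affine_touching; [exact Ht| |].
  - intros z Hz. apply continuous_half_sq_sub, f_cont, HI. solve_abs.
  - intros z al be Hz [r' [Hr' Hmin]].
    assert (HzI : in_open_interval a b z) by (apply HI; solve_abs).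
    assert (A <= g (f z)).
    { rewrite <- (Derive_n_quadratic_2 A al be z). apply (Hv z _ HzI).
      - exists 1. split; [lra|]. intros n y _. apply smooth_quadratic.
      - exists r'. split; [exact Hr'|]. intros y Hy.
        specialize (Hmin y Hy). unfold quadratic. lra. }
    assert (Rabs (g (f z) - g (f x0)) < eps) by (apply Hgf; solve_abs).
    unfold A in *. solve_abs.
Qed.

Lemma sym_quot2_sub_viscosity_sub : sym_quot2_sub a b f g -> viscosity_sub a b f g.
Proof.
  intros Hq x phi Hx [r [Hr Hsm]] [r' [Hr' Hmax]].
  apply Rnot_lt_le. intros Hlt.
  set (eps := (Derive_n phi 2 x - g (f x)) / 3).
  assert (He : 0 < eps) by (unfold eps; lra).
  assert (Hc2 : continuous (Derive_n phi 2) x).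
  { apply (ex_derive_continuous (Derive_n phi 2)), (Hsm 3%nat x).
    rewrite Rminus_diag, Rabs_R0. exact Hr. }
  destruct (continuous_eps_delta _ _ Hc2 eps He) as [d2 [Hd2 Hphi2]].
  destruct (Hq x Hx eps He) as [d3 [Hd3 Hf]].
  destruct (exists_pos_lt4 d2 d3 r r' Hd2 Hd3 Hr Hr') as [t [Ht [Htd2 [Htd3 [Htr Htr']]]]].
  destruct (sym_quot2_Taylor phi x r t (conj Ht Htr) Hsm) as [z1 [z2 [Hz1 [Hz2 Eq]]]].
  assert (Rabs (Derive_n phi 2 z1 - Derive_n phi 2 x) < eps) by (apply Hphi2; lra).
  assert (Rabs (Derive_n phi 2 z2 - Derive_n phi 2 x) < eps) by (apply Hphi2; lra).
  assert (sym_quot2 f x t <= g (f x) + eps) by (apply Hf; lra).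
  assert (sym_quot2 phi x t <= sym_quot2 f x t).
  { apply (sym_quot2_le_of_local_max_sub _ _ _ r'); [lra|exact Hmax]. }
  unfold eps in *. solve_abs.
Qed.

End Viscosity.

Lemma continuous_shift (F : R -> R) p x :
  continuous F (x + p) -> continuous (fun t => F (t + p)) x.
Proof.
  intros H. apply (continuous_comp (fun t => t + p) F x); [|exact H].
  apply (continuous_plus (fun t => t) (fun _ => p)); [apply continuous_id|apply continuous_const].
Qed.

Lemma continuous_shift_sub (F : R -> R) p x :
  continuous F (x - p) -> continuous (fun t => F (t - p)) x.
Proof. intros H. apply (continuous_shift F (- p)), H. Qed.

Ltac solve_continuous :=
  unfold sym_quot2, Rdiv;
  repeat match goal with
  | |- continuous (fun t => @?A t * @?B t) _ => apply (continuous_mult A B)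
  | |- continuous (fun t => @?A t + @?B t) _ => apply (continuous_plus A B)
  | |- continuous (fun t => @?A t - @?B t) _ => apply (continuous_minus A B)
  | |- continuous (fun t => ?F (t + ?p)) _ => apply (continuous_shift F p)
  | |- continuous (fun t => ?F (t - ?p)) _ => apply (continuous_shift_sub F p)
  | |- continuous (fun t => t) _ => apply continuous_id
  | |- continuous (fun _ => ?c) _ => apply continuous_const
  end.

Lemma ex_RInt_continuous_on (F : R -> R) lo hi p q : lo <= p <= hi -> lo <= q <= hi ->
  (forall z, lo <= z <= hi -> continuous F z) -> ex_RInt F p q.
Proof.
  intros Hp Hq H. apply (@ex_RInt_continuous R_CompleteNormedModule). intros z Hz. apply H.
  split.
  - eapply Rle_trans; [|apply Hz]. apply Rmin_glb; lra.
  - eapply Rle_trans; [apply Hz|]. apply Rmax_lub; lra.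
Qed.

(* Real-valued instances of Coquelicot's generic lemmas, in a form that
   [rewrite] and [apply] can match on integrands of type [R -> R]. *)
Lemma ex_RInt_Rplus (F G : R -> R) p q : ex_RInt F p q -> ex_RInt G p q ->
  ex_RInt (fun t => F t + G t) p q.
Proof. exact (ex_RInt_plus F G p q). Qed.

Lemma ex_RInt_Rminus (F G : R -> R) p q : ex_RInt F p q -> ex_RInt G p q ->
  ex_RInt (fun t => F t - G t) p q.
Proof. exact (ex_RInt_minus F G p q). Qed.

Lemma ex_RInt_Rmult_l (F : R -> R) p q k : ex_RInt F p q -> ex_RInt (fun t => k * F t) p q.
Proof. exact (ex_RInt_scal F p q k). Qed.

Lemma RInt_Rplus (F G : R -> R) p q : ex_RInt F p q -> ex_RInt G p q ->
  RInt (fun t => F t + G t) p q = RInt F p q + RInt G p q.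
Proof. exact (@RInt_plus R_CompleteNormedModule F G p q). Qed.

Lemma RInt_Rminus (F G : R -> R) p q : ex_RInt F p q -> ex_RInt G p q ->
  RInt (fun t => F t - G t) p q = RInt F p q - RInt G p q.
Proof. exact (@RInt_minus R_CompleteNormedModule F G p q). Qed.

Lemma RInt_Rmult_l (F : R -> R) p q k : ex_RInt F p q ->
  RInt (fun t => k * F t) p q = k * RInt F p q.
Proof. exact (@RInt_scal R_CompleteNormedModule F p q k). Qed.

Lemma RInt_Rchasles (F : R -> R) p q r : ex_RInt F p q -> ex_RInt F q r ->
  RInt F p q + RInt F q r = RInt F p r.
Proof. exact (@RInt_Chasles R_CompleteNormedModule F p q r). Qed.

Lemma RInt_Rext (F G : R -> R) p q :
  (forall x, Rmin p q < x < Rmax p q -> F x = G x) -> RInt F p q = RInt G p q.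
Proof. exact (@RInt_ext R_CompleteNormedModule F G p q). Qed.

Lemma RInt_Rconst p q (k : R) : RInt (fun _ => k) p q = (q - p) * k.
Proof. exact (@RInt_const R_CompleteNormedModule p q k). Qed.

Lemma RInt_zero_ext (F : R -> R) p q :
  (forall x, Rmin p q < x < Rmax p q -> F x = 0) -> RInt F p q = 0.
Proof.
  intros H. rewrite (RInt_Rext F (fun _ => 0)) by exact H.
  rewrite RInt_Rconst. apply Rmult_0_r.
Qed.

Lemma RInt_second_difference (F G H : R -> R) p q k :
  ex_RInt F p q -> ex_RInt G p q -> ex_RInt H p q ->
  RInt (fun t => k * (F t + G t - 2 * H t)) p q
  = k * (RInt F p q + RInt G p q - 2 * RInt H p q).
Proof.
  intros HF HG HH.
  assert (HFG := ex_RInt_Rplus F G p q HF HG).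
  assert (H2 := ex_RInt_Rmult_l H p q 2 HH).
  rewrite RInt_Rmult_l by exact (ex_RInt_Rminus _ _ p q HFG H2).
  rewrite RInt_Rminus, RInt_Rplus, RInt_Rmult_l by assumption.
  reflexivity.
Qed.

Lemma Derive_n_outside_support (phi : R -> R) c d n t :
  (forall y, y < c \/ d < y -> phi y = 0) -> t < c \/ d < t -> Derive_n phi n t = 0.
Proof.
  intros Hsupp Ht. destruct n as [|n]; [now apply Hsupp|].
  rewrite (Derive_n_ext_loc phi (fun _ => 0)) by
    (destruct Ht as [Ht|Ht];
     [apply (locally_of_ball _ _ (c - t)); [lra|]; intros y Hy; apply Hsupp; left; solve_abs
     |apply (locally_of_ball _ _ (t - d)); [lra|]; intros y Hy; apply Hsupp; right; solve_abs]).
  apply Derive_n_const.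
Qed.

Lemma RInt_mult_extend_support (F Z : R -> R) c d c1 d1 : c1 <= c -> c <= d -> d <= d1 ->
  (forall t, t < c \/ d < t -> Z t = 0) ->
  (forall z, c1 <= z <= d1 -> continuous (fun t => F t * Z t) z) ->
  RInt (fun t => F t * Z t) c d = RInt (fun t => F t * Z t) c1 d1.
Proof.
  intros H1 H2 H3 HZ HC.
  assert (Ex : forall p q, c1 <= p <= d1 -> c1 <= q <= d1 -> ex_RInt (fun t => F t * Z t) p q)
    by (intros; now apply (ex_RInt_continuous_on _ c1 d1)).
  assert (RInt (fun t => F t * Z t) c1 c = 0).
  { apply RInt_zero_ext. intros x Hx. rewrite Rmax_right in Hx by lra. rewrite HZ by lra. ring. }
  assert (RInt (fun t => F t * Z t) d d1 = 0).
  { apply RInt_zero_ext. intros x Hx. rewrite Rmin_left in Hx by lra. rewrite HZ by lra. ring. }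
  assert (C1 := RInt_Rchasles _ c1 c d1 ltac:(apply Ex; lra) ltac:(apply Ex; lra)).
  assert (C2 := RInt_Rchasles _ c d d1 ltac:(apply Ex; lra) ltac:(apply Ex; lra)).
  lra.
Qed.

(* Change of variables [t -> t - s]; the boundary pieces vanish since [G]
   vanishes outside [c, d]. *)
Lemma RInt_mult_shift (F G : R -> R) c d c1 d1 s :
  c1 + Rabs s <= c -> c <= d -> d + Rabs s <= d1 ->
  (forall y, y < c \/ d < y -> G y = 0) ->
  (forall y, continuous G y) ->
  (forall z, c1 - Rabs s <= z <= d1 + Rabs s -> continuous (fun y => F (y - s)) z) ->
  RInt (fun t => F t * G (t + s)) c1 d1 = RInt (fun t => F (t - s) * G t) c1 d1.
Proof.
  assert (Hs : - Rabs s <= s <= Rabs s) by (apply Rabs_le_between, Rle_refl).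
  set (r := Rabs s) in *. clearbody r.
  intros H1 H2 H3 HG HGc HF.
  set (K := fun y => F (y - s) * G y).
  assert (Ex : forall p q, c1 - r <= p <= d1 + r -> c1 - r <= q <= d1 + r -> ex_RInt K p q).
  { intros p q Hp Hq. apply (ex_RInt_continuous_on _ (c1 - r) (d1 + r)); auto.
    intros z Hz. apply (continuous_mult (fun y => F (y - s)) G); auto. }
  assert (E : RInt (fun t => F t * G (t + s)) c1 d1 = RInt K (c1 + s) (d1 + s)).
  { rewrite <- (RInt_ext (fun y => scal 1 (K (1 * y + s)))).
    - replace (c1 + s) with (1 * c1 + s) by ring. replace (d1 + s) with (1 * d1 + s) by ring.
      apply (RInt_comp_lin K 1 s c1 d1). apply Ex; lra.
    - intros x _. unfold K, scal; simpl; unfold mult; simpl.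
      replace (1 * x + s - s) with x by ring. replace (1 * x + s) with (x + s) by ring. ring. }
  assert (RInt K c1 (c1 + s) = 0).
  { apply RInt_zero_ext. intros x Hx. unfold K. rewrite HG; [ring|left].
    assert (Rmax c1 (c1 + s) <= c1 + r) by (apply Rmax_lub; lra). lra. }
  assert (RInt K d1 (d1 + s) = 0).
  { apply RInt_zero_ext. intros x Hx. unfold K. rewrite HG; [ring|right].
    assert (d1 - r <= Rmin d1 (d1 + s)) by (apply Rmin_glb; lra). lra. }
  rewrite E. fold K.
  assert (C1 := RInt_Rchasles K c1 (c1 + s) (d1 + s) ltac:(apply Ex; lra) ltac:(apply Ex; lra)).
  assert (C2 := RInt_Rchasles K c1 d1 (d1 + s) ltac:(apply Ex; lra) ltac:(apply Ex; lra)).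
  lra.
Qed.

Lemma RInt_mult_sym_quot2 (F G : R -> R) c d c1 d1 s :
  0 < s -> c1 + s <= c -> c <= d -> d + s <= d1 ->
  (forall y, y < c \/ d < y -> G y = 0) ->
  (forall y, continuous G y) ->
  (forall z, c1 - 2 * s <= z <= d1 + 2 * s -> continuous F z) ->
  RInt (fun t => F t * sym_quot2 G t s) c1 d1 = RInt (fun t => sym_quot2 F t s * G t) c1 d1.
Proof.
  intros Hs H1 H2 H3 HG HGc HF.
  assert (Es : Rabs s = s) by (apply Rabs_pos_eq; lra).
  assert (Es' : Rabs (- s) = s) by (rewrite Rabs_Ropp; exact Es).
  rewrite (RInt_Rext _
    (fun t => / s ^ 2 * (F t * G (t + s) + F t * G (t + - s) - 2 * (F t * G t)))).
  2: { intros x _. unfold sym_quot2. replace (x - s) with (x + - s) by ring. field. lra. }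
  rewrite (RInt_Rext (fun t => sym_quot2 F t s * G t)
             (fun t => / s ^ 2 * (F (t - s) * G t + F (t - - s) * G t - 2 * (F t * G t)))).
  2: { intros x _. unfold sym_quot2. replace (x - - s) with (x + s) by ring. field. lra. }
  rewrite !RInt_second_difference.
  - rewrite (RInt_mult_shift F G c d c1 d1 s), (RInt_mult_shift F G c d c1 d1 (- s));
      rewrite ?Es, ?Es'; auto; try lra;
      intros z Hz; apply continuous_shift_sub, HF; lra.
  all: apply (ex_RInt_continuous_on _ c1 d1); try lra; intros z Hz; solve_continuous;
       auto; apply HF; lra.
Qed.

Lemma sym_quot2_unif_Derive_n2 (phi : R -> R) lo hi : smooth phi -> forall eps, 0 < eps ->
  exists s2, 0 < s2 /\ forall t s, lo <= t <= hi -> 0 < s < s2 ->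
    Rabs (sym_quot2 phi t s - Derive_n phi 2 t) <= eps.
Proof.
  intros Hsm eps He.
  destruct (Heine (Derive_n phi 2) (fun z => lo - 1 <= z <= hi + 1) (compact_P3 _ _)
              (fun z _ => proj2 (continuity_pt_filterlim _ _)
                               (smooth_Derive_n_continuous phi 2 z Hsm))
              (mkposreal eps He)) as [del Hdel].
  simpl in Hdel.
  exists (Rmin del 1). split; [apply Rmin_pos; [apply cond_pos|lra]|].
  intros t s Ht [Hs Hs']. apply Rmin_Rgt in Hs'. destruct Hs' as [Hsd Hs1].
  destruct (sym_quot2_Taylor phi t 2 s ltac:(lra) (fun n y _ => Hsm n y))
    as [z1 [z2 [Hz1 [Hz2 ->]]]].
  assert (Rabs (Derive_n phi 2 z1 - Derive_n phi 2 t) < eps) by (apply Hdel; solve_abs).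
  assert (Rabs (Derive_n phi 2 z2 - Derive_n phi 2 t) < eps) by (apply Hdel; solve_abs).
  solve_abs.
Qed.

Lemma le_of_le_plus_eps_mul x y K : 0 <= K ->
  (forall eps, 0 < eps -> x <= y + eps * K) -> x <= y.
Proof.
  intros HK H. apply Rle_plus_epsilon. intros eps He.
  specialize (H (eps / (K + 1)) ltac:(apply Rdiv_lt_0_compat; lra)).
  assert (eps / (K + 1) * K <= eps); [|lra].
  apply (Rmult_le_reg_r (K + 1)); [lra|]. field_simplify; nra.
Qed.

Lemma RInt_mult_Derive_n2_le_sym_quot2 (F phi : R -> R) c d c1 d1 s M eps :
  0 < s -> c1 + s <= c -> c <= d -> d + s <= d1 -> smooth phi ->
  (forall y, y < c \/ d < y -> phi y = 0) ->
  (forall z, c1 - 2 * s <= z <= d1 + 2 * s -> continuous F z) ->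
  (forall t, c1 <= t <= d1 -> Rabs (F t) <= M) ->
  (forall t, c1 <= t <= d1 -> Rabs (sym_quot2 phi t s - Derive_n phi 2 t) <= eps) ->
  RInt (fun t => F t * Derive_n phi 2 t) c1 d1
  <= RInt (fun t => sym_quot2 F t s * phi t) c1 d1 + (d1 - c1) * (M * eps).
Proof.
  intros Hs H1 H2 H3 Hsm Hsupp HF HM Heps.
  assert (Hphi : forall n x, continuous (Derive_n phi n) x)
    by (intros; now apply smooth_Derive_n_continuous).
  assert (Hphi0 : forall x, continuous phi x) by exact (Hphi 0%nat).
  assert (HFc : forall z, c1 <= z <= d1 -> continuous F z) by (intros; apply HF; lra).
  assert (Ex : forall G, (forall z, c1 <= z <= d1 -> continuous G z) -> ex_RInt G c1 d1)
    by (intros G HG; apply (ex_RInt_continuous_on G c1 d1); auto; lra).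
  rewrite <- (RInt_mult_sym_quot2 F phi c d c1 d1 s) by auto.
  assert (Err : RInt (fun t => F t * Derive_n phi 2 t - F t * sym_quot2 phi t s) c1 d1
                <= (d1 - c1) * (M * eps)).
  { eapply Rle_trans; [apply Rle_abs|]. apply abs_RInt_le_const; [lra| |].
    - apply Ex. intros z Hz. solve_continuous; auto.
    - intros t Ht. rewrite <- Rmult_minus_distr_l, Rabs_mult.
      apply Rmult_le_compat; try apply Rabs_pos; [now apply HM|].
      rewrite Rabs_minus_sym. now apply Heps. }
  rewrite RInt_Rminus in Err by (apply Ex; intros z Hz; solve_continuous; auto).
  lra.
Qed.

(* [int F phi''] is the limit of [int F (Delta_s phi) / s^2], which equals
   [int (Delta_s F) / s^2 * phi]. *)
Lemma RInt_mult_Derive_n2_le (F H phi : R -> R) c d s0 :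
  0 < s0 -> c <= d -> smooth phi ->
  (forall y, y < c \/ d < y -> phi y = 0) -> (forall y, 0 <= phi y) ->
  (forall z, c - 3 * s0 <= z <= d + 3 * s0 -> continuous F z) ->
  (forall z, c - s0 <= z <= d + s0 -> continuous H z) ->
  (forall eps, 0 < eps -> exists s1, 0 < s1 /\
     forall y s, c - s0 <= y <= d + s0 -> 0 < s < s1 -> sym_quot2 F y s <= H y + eps) ->
  RInt (fun t => F t * Derive_n phi 2 t) c d <= RInt (fun t => H t * phi t) c d.
Proof.
  intros Hs0 Hcd Hsm Hsupp Hpos HF HH Hunif.
  set (c1 := c - s0). set (d1 := d + s0).
  assert (Hphi : forall n x, continuous (Derive_n phi n) x)
    by (intros; now apply smooth_Derive_n_continuous).
  assert (Hphi0 : forall x, continuous phi x) by exact (Hphi 0%nat).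
  assert (HFc : forall z, c1 <= z <= d1 -> continuous F z)
    by (intros; apply HF; unfold c1, d1 in *; lra).
  assert (HHc : forall z, c1 <= z <= d1 -> continuous H z)
    by (intros; apply HH; unfold c1, d1 in *; lra).
  assert (Ex : forall G, (forall z, c1 <= z <= d1 -> continuous G z) -> ex_RInt G c1 d1)
    by (intros G HG; apply (ex_RInt_continuous_on G c1 d1); auto; unfold c1, d1; lra).
  assert (Hsupp2 : forall t, t < c \/ d < t -> Derive_n phi 2 t = 0)
    by (intros t Ht; now apply (Derive_n_outside_support _ c d)).
  rewrite (RInt_mult_extend_support F (Derive_n phi 2) c d c1 d1) by
    first [unfold c1, d1; lra | exact Hsupp2 | intros z Hz; apply (continuous_mult F); auto].
  rewrite (RInt_mult_extend_support H phi c d c1 d1) by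
    first [unfold c1, d1; lra | exact Hsupp | intros z Hz; apply (continuous_mult H); auto].
  destruct (continuity_ab_maj (fun t => Rabs (F t)) c1 d1) as [Mx [HMx _]];
    [unfold c1, d1; lra|..].
  { intros z Hz. apply continuity_pt_filterlim.
    apply (continuous_comp F Rabs); [auto|apply continuous_Rabs]. }
  set (M := Rabs (F Mx)).
  apply (le_of_le_plus_eps_mul _ _ (RInt phi c1 d1 + M * (d1 - c1))).
  { apply Rplus_le_le_0_compat.
    - apply RInt_ge_0; [unfold c1, d1; lra|apply Ex; auto|auto].
    - apply Rmult_le_pos; [apply Rabs_pos|unfold c1, d1; lra]. }
  intros eps He.
  destruct (Hunif eps He) as [s1 [Hs1 HQ]].
  destruct (sym_quot2_unif_Derive_n2 phi c1 d1 Hsm eps He) as [s2 [Hs2 HT]].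
  destruct (exists_pos_lt4 s0 s1 s2 s2 Hs0 Hs1 Hs2 Hs2) as [s [Hs [Hss0 [Hss1 [Hss2 _]]]]].
  assert (Hquot := RInt_mult_Derive_n2_le_sym_quot2 F phi c d c1 d1 s M eps Hs
                     ltac:(unfold c1; lra) Hcd ltac:(unfold d1; lra) Hsm Hsupp
                     ltac:(intros z Hz; apply HF; unfold c1, d1 in Hz; lra)
                     HMx (fun t Ht => HT t s Ht (conj Hs Hss2))).
  assert (Bound : RInt (fun t => sym_quot2 F t s * phi t) c1 d1
                  <= RInt (fun t => H t * phi t) c1 d1 + eps * RInt phi c1 d1).
  { rewrite <- RInt_Rmult_l, <- RInt_Rplus by (apply Ex; intros z Hz; solve_continuous; auto).
    apply RInt_le; [unfold c1, d1; lra|apply Ex..|].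
    - intros z Hz. solve_continuous; auto; apply HF; unfold c1, d1 in Hz; lra.
    - intros z Hz. solve_continuous; auto.
    - intros t Ht. specialize (HQ t s ltac:(unfold c1, d1 in Ht; lra) ltac:(lra)).
      specialize (Hpos t). nra. }
  lra.
Qed.

(** * A smooth bump function *)

Lemma pow_div_fact_le_exp y k : 0 <= y -> y ^ k / INR (Factorial.fact k) <= exp y.
Proof.
  intros Hy. eapply Rle_trans; [|apply (exp_ge_taylor y k Hy)].
  destruct k as [|k]; [simpl; lra|]. rewrite tech5.
  assert (0 <= sum_f_R0 (fun j => y ^ j / INR (Factorial.fact j)) k); [|lra].
  apply cond_pos_sum. intros j. apply Rdiv_le_0_compat; [now apply pow_le|apply INR_fact_lt_0].
Qed.

(* [exp (-1/s) <= (k+1)! s^(k+1)], from the Taylor series of [exp (1/s)]. *)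
Lemma exp_neg_inv_div_pow_small k eps : 0 < eps ->
  exists d, 0 < d /\ forall s, 0 < s < d -> exp (- / s) / s ^ k < eps.
Proof.
  intros He.
  set (F := INR (Factorial.fact (S k))).
  assert (HF : 0 < F) by apply INR_fact_lt_0.
  exists (eps / F). split; [now apply Rdiv_lt_0_compat|].
  intros s [Hs Hsd].
  assert (Hsk : 0 < s ^ k) by now apply pow_lt.
  assert (Hexp := pow_div_fact_le_exp (/ s) (S k) ltac:(left; now apply Rinv_0_lt_compat)).
  fold F in Hexp. set (X := exp (/ s)) in *.
  assert (HX : 0 < X) by apply exp_pos.
  assert (Hlow : / (F * s) <= X * s ^ k).
  { replace (/ (F * s)) with ((/ s) ^ S k / F * s ^ k).
    - apply Rmult_le_compat_r; lra.
    - rewrite pow_inv. simpl. field. lra. }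
  rewrite exp_Ropp. fold X.
  replace (/ X / s ^ k) with (/ (X * s ^ k)) by (field; lra).
  apply Rle_lt_trans with (F * s).
  - rewrite <- (Rinv_inv (F * s)). apply Rinv_le_contravar; [|exact Hlow].
    apply Rinv_0_lt_compat. nra.
  - apply (Rmult_lt_reg_r (/ F)); [now apply Rinv_0_lt_compat|].
    replace (F * s * / F) with s by (field; lra). exact Hsd.
Qed.

Inductive polynomial_fun : (R -> R) -> Prop :=
| polynomial_const c : polynomial_fun (fun _ => c)
| polynomial_id : polynomial_fun (fun x => x)
| polynomial_plus p q : polynomial_fun p -> polynomial_fun q ->
    polynomial_fun (fun x => p x + q x)
| polynomial_mult p q : polynomial_fun p -> polynomial_fun q ->
    polynomial_fun (fun x => p x * q x).

Lemma polynomial_fun_ext p q : polynomial_fun p -> (forall x, p x = q x) -> polynomial_fun q.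
Proof. intros H E. replace q with p; [exact H|]. now apply functional_extensionality. Qed.

Lemma polynomial_fun_derive p : polynomial_fun p ->
  exists dp, polynomial_fun dp /\ forall x, is_derive p x (dp x).
Proof.
  induction 1 as [c| |p q _ [dp [Hdp Dp]] _ [dq [Hdq Dq]]|p q Hp [dp [Hdp Dp]] Hq [dq [Hdq Dq]]].
  - exists (fun _ => 0). split; [constructor|]. intros x. auto_derive; auto.
  - exists (fun _ => 1). split; [constructor|]. intros x. auto_derive; auto.
  - exists (fun x => dp x + dq x). split; [now constructor|].
    intros x. now apply (is_derive_plus p q).
  - exists (fun x => dp x * q x + p x * dq x). split.
    + constructor; constructor; auto.
    + intros x. apply (is_derive_mult p q); [apply Dp|apply Dq|intros; apply Rmult_comm].
Qed.

Lemma polynomial_fun_continuous p x : polynomial_fun p -> continuous p x.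
Proof.
  intros H. destruct (polynomial_fun_derive p H) as [dp [_ Dp]].
  apply (ex_derive_continuous p). exists (dp x). apply Dp.
Qed.

Lemma polynomial_fun_local_bound p y : polynomial_fun p ->
  exists B, 0 < B /\ forall z, Rabs (z - y) <= 1 -> Rabs (p z) <= B.
Proof.
  intros H.
  destruct (continuity_ab_maj (fun t => Rabs (p t)) (y - 1) (y + 1)) as [Mx [HM _]]; [lra|..].
  { intros c _. apply continuity_pt_filterlim.
    apply (continuous_comp p Rabs); [now apply polynomial_fun_continuous|apply continuous_Rabs]. }
  exists (Rabs (p Mx) + 1). split; [generalize (Rabs_pos (p Mx)); lra|].
  intros z Hz. assert (Rabs (p z) <= Rabs (p Mx)) by (apply HM; solve_abs). lra.
Qed.

Section Bump.

Variable e : R.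
Hypothesis e_pos : 0 < e.

Definition gap (y : R) : R := e * e - y * y.

(* Functions of this shape are closed under differentiation, which makes
   [bump = bump_term (fun _ => 1) 0] smooth. *)
Definition bump_term (q : R -> R) (m : nat) (y : R) : R :=
  if Rlt_dec 0 (gap y) then q y * exp (- / gap y) / gap y ^ m else 0.

(* Differentiating [q exp (-1/gap) / gap^m] with [gap' = -2y] gives
   [bump_coef q dq m exp (-1/gap) / gap^(m+2)]. *)
Definition bump_coef (q dq : R -> R) (m : nat) (y : R) : R :=
  dq y * (gap y * gap y) - 2 * y * q y + 2 * INR m * y * q y * gap y.

Lemma gap_continuous y : continuous gap y.
Proof. apply (ex_derive_continuous gap). unfold gap. auto_derive. exact I. Qed.

Lemma polynomial_fun_gap : polynomial_fun gap.
Proof.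
  apply (polynomial_fun_ext (fun y => e * e + (-1) * (y * y))); [repeat constructor|].
  intros y. unfold gap. ring.
Qed.

Lemma bump_term_is_derive_inside q dq m y : (forall x, is_derive q x (dq x)) -> 0 < gap y ->
  is_derive (bump_term q m) y (bump_term (bump_coef q dq m) (m + 2) y).
Proof.
  intros Dq Hy.
  destruct (continuous_eps_delta gap y (gap_continuous y) (gap y) Hy) as [r [Hr Hnear]].
  apply (is_derive_ext_loc (fun u => q u * exp (- / gap u) / gap u ^ m)).
  { apply (locally_of_ball _ _ r Hr). intros u Hu. specialize (Hnear u Hu).
    unfold bump_term. destruct (Rlt_dec 0 (gap u)); [reflexivity|solve_abs]. }
  unfold bump_term. destruct (Rlt_dec 0 (gap y)); [|lra].
  unfold gap in *. auto_derive.
  - repeat split; [now exists (dq y)|lra|apply pow_nonzero; lra].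
  - replace (Derive (fun x => q x) y) with (dq y) by (symmetry; apply is_derive_unique, Dq).
    unfold bump_coef, gap.
    set (G := e * e - y * y) in *. replace (e * e + - (y * y)) with G by (unfold G; ring).
    destruct m as [|m].
    + simpl. field. lra.
    + simpl pred. rewrite !Nat.add_succ_l. simpl pow. rewrite S_INR, pow_add. simpl pow.
      field. split; [lra|apply pow_nonzero; lra].
Qed.

Lemma gap_shift_le y h : gap y = 0 -> Rabs h < 1 -> gap (y + h) <= Rabs h * (2 * e + 1).
Proof.
  intros Hy Hh. unfold gap in *.
  assert (Rabs y = e).
  { destruct (Rle_or_lt 0 y); [rewrite Rabs_pos_eq by lra|rewrite Rabs_left by lra]; nra. }
  replace (e * e - (y + h) * (y + h)) with (- h * (2 * y + h)) by nra.
  eapply Rle_trans; [apply Rle_abs|]. rewrite Rabs_mult, Rabs_Ropp.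
  apply Rmult_le_compat_l; [apply Rabs_pos|]. solve_abs.
Qed.

(* On the boundary [gap y = 0] the flatness of [exp (-1/s)] at [0+] beats the
   polynomial factor and the pole [1 / gap^m]. *)
Lemma bump_term_is_derive_boundary q m y : polynomial_fun q -> gap y = 0 ->
  is_derive (bump_term q m) y 0.
Proof.
  intros Hq Hy. apply is_derive_Reals. intros eps He.
  destruct (polynomial_fun_local_bound q y Hq) as [B [HB Hbound]].
  set (L := 2 * e + 1). assert (HL : 0 < L) by (unfold L; lra).
  destruct (exp_neg_inv_div_pow_small (S m) (eps / (B * L)) ltac:(apply Rdiv_lt_0_compat; nra))
    as [d [Hd Hflat]].
  exists (mkposreal (Rmin 1 (d / L)) (Rmin_pos 1 (d / L) Rlt_0_1 (Rdiv_lt_0_compat _ _ Hd HL))).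
  intros h Hh0 Hh. simpl in Hh. apply Rmin_Rgt in Hh. destruct Hh as [Hh1 HhL].
  assert (Hh : 0 < Rabs h) by now apply Rabs_pos_lt.
  unfold bump_term. destruct (Rlt_dec 0 (gap y)); [lra|].
  destruct (Rlt_dec 0 (gap (y + h))) as [Hp|Hp].
  2: { replace ((0 - 0) / h - 0) with 0 by (field; lra). rewrite Rabs_R0. lra. }
  set (s := gap (y + h)) in *.
  assert (Hs : s <= Rabs h * L) by (apply gap_shift_le; assumption).
  assert (Hsd : s < d).
  { apply (Rle_lt_trans _ _ _ Hs). apply (Rmult_lt_reg_r (/ L)); [now apply Rinv_0_lt_compat|].
    rewrite Rmult_assoc, Rinv_r, Rmult_1_r by lra. exact HhL. }
  specialize (Hflat s (conj Hp Hsd)).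
  assert (Hqb : Rabs (q (y + h)) <= B) by (apply Hbound; replace (y + h - y) with h by ring; lra).
  assert (Hex : 0 < exp (- / s)) by apply exp_pos.
  assert (Hpw : 0 < s ^ m) by now apply pow_lt.
  replace ((q (y + h) * exp (- / s) / s ^ m - 0) / h - 0)
    with (q (y + h) * (exp (- / s) / s ^ m / h)) by (field; lra).
  rewrite Rabs_mult, Rabs_div, (Rabs_pos_eq (exp (- / s) / s ^ m)) by
    first [lra | apply Rdiv_le_0_compat; lra].
  assert (Hratio : exp (- / s) / s ^ m / Rabs h <= L * (exp (- / s) / s ^ S m)).
  { simpl pow. unfold Rdiv. rewrite Rinv_mult.
    replace (L * (exp (- / s) * (/ s * / s ^ m)))
      with ((exp (- / s) * / s ^ m) * (L * / s)) by ring.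
    apply Rmult_le_compat_l; [apply Rmult_le_pos; [lra|left; now apply Rinv_0_lt_compat]|].
    apply (Rmult_le_reg_r (Rabs h * s)); [nra|].
    replace (/ Rabs h * (Rabs h * s)) with s by (field; lra).
    replace (L * / s * (Rabs h * s)) with (Rabs h * L) by (field; lra). exact Hs. }
  apply Rle_lt_trans with (B * (L * (exp (- / s) / s ^ S m))).
  - apply Rmult_le_compat; try apply Rabs_pos; [|exact Hqb|exact Hratio].
    apply Rdiv_le_0_compat; [apply Rdiv_le_0_compat|]; lra.
  - replace eps with (B * (L * (eps / (B * L)))) by (field; lra).
    apply Rmult_lt_compat_l; [lra|]. apply Rmult_lt_compat_l; [lra|exact Hflat].
Qed.

Lemma bump_term_is_derive_outside q m y : gap y < 0 -> is_derive (bump_term q m) y 0.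
Proof.
  intros Hy.
  destruct (continuous_eps_delta gap y (gap_continuous y) (- gap y) ltac:(lra)) as [r [Hr Hnear]].
  apply (is_derive_ext_loc (fun _ => 0)); [|auto_derive; auto].
  apply (locally_of_ball _ _ r Hr). intros u Hu. specialize (Hnear u Hu).
  unfold bump_term. destruct (Rlt_dec 0 (gap u)); [solve_abs|reflexivity].
Qed.

Lemma bump_term_is_derive q m : polynomial_fun q ->
  exists q', polynomial_fun q' /\ forall y, is_derive (bump_term q m) y (bump_term q' (m + 2) y).
Proof.
  intros Hq. destruct (polynomial_fun_derive q Hq) as [dq [Hdq Dq]].
  exists (bump_coef q dq m). split.
  { assert (Hg := polynomial_fun_gap).
    apply (polynomial_fun_ext (fun y => dq y * (gap y * gap y)
             + ((-2) * y * q y + 2 * INR m * y * q y * gap y))).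
    - repeat (constructor; auto).
    - intros y. unfold bump_coef. ring. }
  intros y. destruct (Rtotal_order 0 (gap y)) as [Hy|[Hy|Hy]].
  - now apply bump_term_is_derive_inside.
  - replace (bump_term _ _ y) with 0.
    + now apply bump_term_is_derive_boundary.
    + unfold bump_term. destruct (Rlt_dec 0 (gap y)); [lra|reflexivity].
  - replace (bump_term _ _ y) with 0.
    + now apply bump_term_is_derive_outside.
    + unfold bump_term. destruct (Rlt_dec 0 (gap y)); [lra|reflexivity].
Qed.

Lemma smooth_bump_term q m : polynomial_fun q -> smooth (bump_term q m).
Proof.
  intros Hq n. revert q m Hq. induction n as [|n IH]; intros q m Hq x; [exact I|].
  destruct (bump_term_is_derive q m Hq) as [q' [Hq' D]].
  apply (ex_derive_n_S_of_is_derive _ _ D), IH, Hq'.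
Qed.

Definition bump (y : R) : R := bump_term (fun _ => 1) 0 y.

Lemma smooth_bump : smooth bump.
Proof. apply smooth_bump_term. constructor. Qed.

Lemma bump_continuous y : continuous bump y.
Proof. exact (smooth_Derive_n_continuous bump 0 y smooth_bump). Qed.

Lemma gap_pos_iff y : 0 < gap y <-> Rabs y < e.
Proof.
  unfold gap. split; intros H.
  - apply Rnot_le_lt. intros Hle. assert (e * e <= Rabs y * Rabs y) by nra.
    rewrite <- Rabs_mult, Rabs_pos_eq in * by nra. lra.
  - assert (Rabs y * Rabs y < e * e) by (apply Rmult_le_0_lt_compat; auto; apply Rabs_pos).
    rewrite <- Rabs_mult, Rabs_pos_eq in * by nra. lra.
Qed.

Lemma bump_nonneg y : 0 <= bump y.
Proof.
  unfold bump, bump_term. destruct (Rlt_dec 0 (gap y)); [|lra].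
  simpl. rewrite Rmult_1_l, Rdiv_1_r. left. apply exp_pos.
Qed.

Lemma bump_pos y : Rabs y < e -> 0 < bump y.
Proof.
  intros H. apply gap_pos_iff in H. unfold bump, bump_term.
  destruct (Rlt_dec 0 (gap y)); [|lra].
  simpl. rewrite Rmult_1_l, Rdiv_1_r. apply exp_pos.
Qed.

Lemma bump_outside y : e <= Rabs y -> bump y = 0.
Proof.
  intros H. unfold bump, bump_term. destruct (Rlt_dec 0 (gap y)) as [Hy|]; [|reflexivity].
  apply gap_pos_iff in Hy. lra.
Qed.

End Bump.

(** * Smoothed tents *)

Lemma is_derive_RInt_continuous (F : R -> R) p x :
  (forall z, continuous F z) -> is_derive (fun y => RInt F p y) x (F x).
Proof.
  intros H. apply (is_derive_RInt F (fun y => RInt F p y) p x); [|apply H].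
  apply filter_forall. intros y. apply (@RInt_correct R_CompleteNormedModule).
  apply (@ex_RInt_continuous R_CompleteNormedModule). intros; apply H.
Qed.

Lemma second_difference_nonneg_of_derive_monotone (K H : R -> R) u t : 0 <= t ->
  (forall x, is_derive K x (H x)) -> (forall x y, x <= y -> H x <= H y) ->
  0 <= K (u + t) + K (u - t) - 2 * K u.
Proof.
  intros Ht DK Hmono.
  assert (HK : forall x, continuity_pt K x).
  { intros x. apply continuity_pt_filterlim, (ex_derive_continuous K). now exists (H x). }
  destruct (MVT_gen K u (u + t) H (fun x _ => DK x) (fun x _ => HK x)) as [x1 [Hx1 E1]].
  destruct (MVT_gen K (u - t) u H (fun x _ => DK x) (fun x _ => HK x)) as [x2 [Hx2 E2]].
  rewrite Rmin_left, Rmax_right in Hx1, Hx2 by lra.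
  assert (H x2 <= H x1) by (apply Hmono; lra).
  replace (K (u + t) + K (u - t) - 2 * K u) with ((K (u + t) - K u) - (K u - K (u - t))) by ring.
  rewrite E1, E2. replace (u + t - u) with t by ring. replace (u - (u - t)) with t by ring.
  nra.
Qed.

(* Integrating [(x^2/2 psi' - x psi)' = x^2/2 psi'' - psi]; the boundary terms
   vanish because [psi] is zero near [c] and [d]. *)
Lemma RInt_eq_RInt_half_sq_Derive_n2 (psi : R -> R) c d c' d' :
  c < c' -> d' < d -> smooth psi -> (forall y, y < c' \/ d' < y -> psi y = 0) ->
  RInt psi c d = RInt (fun x => x ^ 2 / 2 * Derive_n psi 2 x) c d.
Proof.
  intros Hc Hd Hsm Hsupp.
  assert (Hcont : forall n x, continuous (Derive_n psi n) x)
    by (intros; now apply smooth_Derive_n_continuous).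
  assert (Dn : forall n x, is_derive (Derive_n psi n) x (Derive_n psi (S n) x))
    by (intros n x; apply Derive_correct, (Hsm (S n))).
  set (P := fun x => x ^ 2 / 2 * Derive_n psi 1 x - x * psi x).
  assert (DP : forall x, is_derive P x (x ^ 2 / 2 * Derive_n psi 2 x - psi x)).
  { intros x. unfold P.
    assert (H1 : is_derive (fun x => x ^ 2 / 2) x x) by (auto_derive; [exact I|field]).
    assert (H2 : is_derive (fun x : R => x) x 1) by (auto_derive; [exact I|ring]).
    assert (H3 := is_derive_mult _ _ x _ _ H1 (Dn 1%nat x) Rmult_comm).
    assert (H4 := is_derive_mult _ _ x _ _ H2 (Dn 0%nat x) Rmult_comm).
    assert (H5 := is_derive_minus _ _ x _ _ H3 H4).
    simpl in H5. unfold minus, plus, opp, mult in H5; simpl in H5.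
    replace (x ^ 2 / 2 * Derive_n psi 2 x - psi x) with
      (x * Derive_n psi 1 x + x ^ 2 / 2 * Derive_n psi 2 x
       + - (1 * psi x + x * Derive_n psi 1 x)) by (simpl; ring).
    exact H5. }
  assert (Hc2 : forall x, continuous (fun x => x ^ 2 / 2 * Derive_n psi 2 x) x).
  { intros x. apply (continuous_mult (fun x => x ^ 2 / 2)); [|apply Hcont].
    apply (ex_derive_continuous (fun x => x ^ 2 / 2)). auto_derive. exact I. }
  assert (HI := is_RInt_derive P _ c d (fun x _ => DP x)
                  (fun x _ => continuous_minus _ _ x (Hc2 x) (Hcont 0%nat x))).
  apply is_RInt_unique in HI.
  assert (Hends : forall y, y = c \/ y = d -> P y = 0).
  { intros y Hy. assert (Hout : y < c' \/ d' < y) by (destruct Hy as [->| ->]; lra).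
    unfold P. rewrite (Derive_n_outside_support psi c' d' 1 y Hsupp Hout), (Hsupp y Hout). ring. }
  rewrite Hends, Hends in HI by auto.
  rewrite RInt_Rminus in HI.
  - rewrite minus_eq_zero in HI. change zero with 0 in HI. lra.
  - apply (@ex_RInt_continuous R_CompleteNormedModule). intros; apply Hc2.
  - apply (@ex_RInt_continuous R_CompleteNormedModule). intros; apply (Hcont 0%nat).
Qed.

Section Tent.

Variable e : R.
Hypothesis e_pos : 0 < e.

Definition bump_int (x : R) : R := RInt (bump e) (- e) x.
Definition bump_int2 (x : R) : R := RInt bump_int (- e) x.
Definition bump_mass : R := bump_int e.

Lemma is_derive_bump_int x : is_derive bump_int x (bump e x).
Proof. apply is_derive_RInt_continuous, (bump_continuous e e_pos). Qed.

Lemma bump_int_continuous x : continuous bump_int x.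
Proof. apply (ex_derive_continuous bump_int). exists (bump e x). apply is_derive_bump_int. Qed.

Lemma is_derive_bump_int2 x : is_derive bump_int2 x (bump_int x).
Proof. apply is_derive_RInt_continuous, bump_int_continuous. Qed.

Lemma ex_RInt_bump p q : ex_RInt (bump e) p q.
Proof.
  apply (@ex_RInt_continuous R_CompleteNormedModule). intros; apply (bump_continuous e e_pos).
Qed.

Lemma bump_int_chasles x y : bump_int y = bump_int x + RInt (bump e) x y.
Proof. unfold bump_int. symmetry. apply RInt_Rchasles; apply ex_RInt_bump. Qed.

Lemma bump_int_left x : x <= - e -> bump_int x = 0.
Proof.
  intros H. apply RInt_zero_ext. intros y Hy. apply (bump_outside e e_pos).
  rewrite Rmax_left in Hy by lra. solve_abs.
Qed.

Lemma bump_int_right x : e <= x -> bump_int x = bump_mass.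
Proof.
  intros H. unfold bump_mass. rewrite (bump_int_chasles e x), (RInt_zero_ext _ e x); [ring|].
  intros y Hy. apply (bump_outside e e_pos). rewrite Rmin_left in Hy by lra. solve_abs.
Qed.

Lemma bump_int_nondecreasing x y : x <= y -> bump_int x <= bump_int y.
Proof.
  intros H. rewrite (bump_int_chasles x y).
  assert (0 <= RInt (bump e) x y); [|lra].
  apply RInt_ge_0; [exact H|apply ex_RInt_bump|intros; apply bump_nonneg].
Qed.

Lemma bump_mass_pos : 0 < bump_mass.
Proof.
  apply RInt_gt_0; [lra| |intros; apply (bump_continuous e e_pos)].
  intros x Hx. apply (bump_pos e e_pos); solve_abs.
Qed.

Lemma bump_int2_left x : x <= - e -> bump_int2 x = 0.
Proof.
  intros H. apply RInt_zero_ext. intros y Hy. apply bump_int_left.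
  rewrite Rmax_left in Hy by lra. lra.
Qed.

Lemma bump_int2_right x : e <= x -> bump_int2 x = bump_mass * (x - e) + bump_int2 e.
Proof.
  intros H. unfold bump_int2.
  rewrite <- (RInt_Rchasles _ (- e) e x) by
    (apply (@ex_RInt_continuous R_CompleteNormedModule); intros; apply bump_int_continuous).
  rewrite (RInt_Rext bump_int (fun _ => bump_mass) e x), RInt_Rconst; [ring|].
  intros y Hy. apply bump_int_right. rewrite Rmin_left in Hy by lra. lra.
Qed.

(* Close to [bump_mass * max 0 (t - |x - m|)] when [e] is small. *)
Definition tent (m t x : R) : R :=
  bump_int2 (x - (m - t)) + bump_int2 (x - (m + t)) - 2 * bump_int2 (x - m).

Definition bump_second_difference (m t x : R) : R :=
  bump e (x - (m - t)) + bump e (x - (m + t)) - 2 * bump e (x - m).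

Lemma is_derive_second_difference_shift (K F : R -> R) m t x :
  (forall y, is_derive K y (F y)) ->
  is_derive (fun x => K (x - (m - t)) + K (x - (m + t)) - 2 * K (x - m)) x
            (F (x - (m - t)) + F (x - (m + t)) - 2 * F (x - m)).
Proof.
  intros DK.
  assert (Ds : forall p, is_derive (fun x => K (x - p)) x (F (x - p))).
  { intros p. rewrite <- (Rmult_1_l (F (x - p))).
    apply (is_derive_comp K (fun u => u - p) x); [apply DK|auto_derive; auto; ring]. }
  apply (is_derive_minus (fun x => K (x - (m - t)) + K (x - (m + t))) (fun x => 2 * K (x - m))).
  - now apply (is_derive_plus (fun x => K (x - (m - t))) (fun x => K (x - (m + t)))).
  - now apply (is_derive_scal (fun x => K (x - m))).
Qed.

Lemma smooth_bump_second_difference m t : smooth (bump_second_difference m t).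
Proof.
  assert (H := smooth_bump e e_pos).
  apply smooth_minus; [apply smooth_plus|apply smooth_scal]; now apply smooth_shift.
Qed.

Lemma smooth_tent m t : smooth (tent m t).
Proof.
  apply (smooth_of_is_derive _ _ (fun x =>
           is_derive_second_difference_shift bump_int2 bump_int m t x is_derive_bump_int2)).
  apply (smooth_of_is_derive _ _ (fun x =>
           is_derive_second_difference_shift bump_int (bump e) m t x is_derive_bump_int)).
  apply smooth_bump_second_difference.
Qed.

Lemma Derive_n_tent_2 m t x : Derive_n (tent m t) 2 x = bump_second_difference m t x.
Proof.
  unfold tent.
  rewrite (Derive_n_S_of_is_derive _ _ (fun x =>
             is_derive_second_difference_shift bump_int2 bump_int m t x is_derive_bump_int2)).
  rewrite (Derive_n_S_of_is_derive _ _ (fun x =>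
             is_derive_second_difference_shift bump_int (bump e) m t x is_derive_bump_int)).
  reflexivity.
Qed.

Lemma tent_nonneg m t x : 0 <= t -> 0 <= tent m t x.
Proof.
  intros Ht. unfold tent.
  replace (x - (m - t)) with (x - m + t) by ring. replace (x - (m + t)) with (x - m - t) by ring.
  apply (second_difference_nonneg_of_derive_monotone bump_int2 bump_int); [exact Ht| |].
  - apply is_derive_bump_int2.
  - apply bump_int_nondecreasing.
Qed.

Lemma tent_outside m t x : 0 <= t -> x < m - t - e \/ m + t + e < x -> tent m t x = 0.
Proof.
  intros Ht [Hx|Hx]; unfold tent.
  - rewrite !bump_int2_left by lra. ring.
  - rewrite (bump_int2_right (x - (m - t))), (bump_int2_right (x - (m + t))),
      (bump_int2_right (x - m)) by lra.
    ring.
Qed.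

Lemma RInt_mult_bump_shift (W : R -> R) p c d : c <= p - e -> p + e <= d ->
  (forall z, c <= z <= d -> continuous W z) ->
  RInt (fun x => W x * bump e (x - p)) c d = RInt (fun z => W (z + p) * bump e z) (- e) e.
Proof.
  intros H1 H2 HW.
  set (K := fun z => W (z + p) * bump e z).
  assert (Ex : forall u v, c - p <= u <= d - p -> c - p <= v <= d - p -> ex_RInt K u v).
  { intros u v Hu Hv. apply (ex_RInt_continuous_on K (c - p) (d - p)); auto.
    intros z Hz. unfold K. solve_continuous; [apply HW; lra|apply (bump_continuous e e_pos)]. }
  assert (E : RInt (fun x => W x * bump e (x - p)) c d = RInt K (c - p) (d - p)).
  { rewrite <- (RInt_ext (fun y => scal 1 (K (1 * y + - p)))).
    - replace (c - p) with (1 * c + - p) by ring. replace (d - p) with (1 * d + - p) by ring.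
      apply (RInt_comp_lin K 1 (- p) c d). apply Ex; lra.
    - intros x _. unfold K, scal; simpl; unfold mult; simpl.
      replace (1 * x + - p + p) with x by ring. replace (1 * x + - p) with (x - p) by ring. ring. }
  assert (RInt K (c - p) (- e) = 0).
  { apply RInt_zero_ext. intros x Hx. unfold K. rewrite (bump_outside e e_pos); [ring|].
    rewrite Rmax_right in Hx by lra. solve_abs. }
  assert (RInt K e (d - p) = 0).
  { apply RInt_zero_ext. intros x Hx. unfold K. rewrite (bump_outside e e_pos); [ring|].
    rewrite Rmin_left in Hx by lra. solve_abs. }
  assert (C1 := RInt_Rchasles K (c - p) (- e) e ltac:(apply Ex; lra) ltac:(apply Ex; lra)).
  assert (C2 := RInt_Rchasles K (c - p) e (d - p) ltac:(apply Ex; lra) ltac:(apply Ex; lra)).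
  lra.
Qed.

Lemma RInt_mult_bump_shift_approx (W : R -> R) p c d eps : c <= p - e -> p + e <= d ->
  (forall z, c <= z <= d -> continuous W z) ->
  (forall z, - e < z < e -> Rabs (W (z + p) - W p) <= eps) ->
  Rabs (RInt (fun x => W x * bump e (x - p)) c d - W p * bump_mass) <= eps * bump_mass.
Proof.
  intros H1 H2 HW Hnear. rewrite RInt_mult_bump_shift by assumption.
  assert (Hc : forall z, - e <= z <= e -> continuous (fun z => (W (z + p) - W p) * bump e z) z).
  { intros z Hz. solve_continuous; [apply HW; lra|apply (bump_continuous e e_pos)]. }
  assert (Ex := ex_RInt_continuous_on _ (- e) e (- e) e ltac:(lra) ltac:(lra) Hc).
  replace (RInt (fun z => W (z + p) * bump e z) (- e) e - W p * bump_mass)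
    with (RInt (fun z => (W (z + p) - W p) * bump e z) (- e) e).
  2: { unfold bump_mass, bump_int. rewrite <- RInt_Rmult_l by apply ex_RInt_bump.
       rewrite <- RInt_Rminus.
       - apply RInt_Rext. intros. ring.
       - apply (ex_RInt_continuous_on _ (- e) e); try lra. intros z Hz.
         solve_continuous; [apply HW; lra|apply (bump_continuous e e_pos)].
       - apply ex_RInt_Rmult_l, ex_RInt_bump. }
  eapply Rle_trans; [apply abs_RInt_le; [lra|exact Ex]|].
  unfold bump_mass, bump_int. rewrite <- RInt_Rmult_l by apply ex_RInt_bump.
  apply RInt_le; [lra| |apply ex_RInt_Rmult_l, ex_RInt_bump|].
  - apply (ex_RInt_continuous_on _ (- e) e); try lra. intros z Hz.
    apply (continuous_comp _ Rabs); [now apply Hc|apply continuous_Rabs].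
  - intros z Hz. rewrite Rabs_mult, (Rabs_pos_eq (bump e z)) by apply bump_nonneg.
    apply Rmult_le_compat_r; [apply bump_nonneg|now apply Hnear].
Qed.

Lemma RInt_mult_bump_second_difference (W : R -> R) m t c d : c <= d ->
  (forall z, c <= z <= d -> continuous W z) ->
  RInt (fun x => W x * bump_second_difference m t x) c d
  = RInt (fun x => W x * bump e (x - (m - t))) c d + RInt (fun x => W x * bump e (x - (m + t))) c d
    - 2 * RInt (fun x => W x * bump e (x - m)) c d.
Proof.
  intros Hcd HW.
  assert (Ex : forall p, ex_RInt (fun x => W x * bump e (x - p)) c d).
  { intros p. apply (ex_RInt_continuous_on _ c d); try lra. intros z Hz.
    solve_continuous; [now apply HW|apply (bump_continuous e e_pos)]. }
  assert (Ex2 := ex_RInt_Rplus _ _ c d (Ex (m - t)) (Ex (m + t))).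
  assert (Ex3 := ex_RInt_Rmult_l _ c d 2 (Ex m)).
  rewrite <- RInt_Rmult_l, <- RInt_Rplus by apply Ex.
  rewrite <- (RInt_Rminus _ _ c d Ex2 Ex3).
  apply (RInt_Rext (fun x => W x * bump_second_difference m t x)).
  intros x _. unfold bump_second_difference. ring.
Qed.

End Tent.

(* Testing against [tent e x0 t] gives [bump_mass e] times the second
   difference of [w] at [x0], up to the oscillation of [w] at scale [e]. *)
Lemma second_difference_nonpos_of_tent (w : R -> R) x0 t : 0 < t ->
  (forall z, x0 - 2 * t <= z <= x0 + 2 * t -> continuous w z) ->
  (forall e, 0 < e -> 4 * e <= t ->
     RInt (fun y => w y * Derive_n (tent e x0 t) 2 y) (x0 - t - 2 * e) (x0 + t + 2 * e) <= 0) ->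
  w (x0 + t) + w (x0 - t) - 2 * w x0 <= 0.
Proof.
  intros Ht Hw Hweak.
  apply Rle_plus_epsilon. intros eps He.
  set (eta := eps / 4). assert (Heta : 0 < eta) by (unfold eta; lra).
  destruct (continuous_eps_delta w (x0 - t) (Hw (x0 - t) ltac:(lra)) eta Heta) as [da [Hda Hwa]].
  destruct (continuous_eps_delta w (x0 + t) (Hw (x0 + t) ltac:(lra)) eta Heta) as [db [Hdb Hwb]].
  destruct (continuous_eps_delta w x0 (Hw x0 ltac:(lra)) eta Heta) as [dm [Hdm Hwm]].
  destruct (exists_pos_lt4 da db dm (t / 4) Hda Hdb Hdm ltac:(lra)) as [e [He0 [Ea [Eb [Em Et]]]]].
  assert (Et' : 4 * e <= t) by lra.
  set (c := x0 - t - 2 * e). set (d := x0 + t + 2 * e).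
  assert (Hwcd : forall z, c <= z <= d -> continuous w z)
    by (intros z Hz; apply Hw; unfold c, d in Hz; lra).
  assert (Happrox : forall p dp, c <= p - e -> p + e <= d -> e < dp ->
            (forall y, Rabs (y - p) < dp -> Rabs (w y - w p) < eta) ->
            Rabs (RInt (fun x => w x * bump e (x - p)) c d - w p * bump_mass e)
            <= eta * bump_mass e).
  { intros p dp Hp1 Hp2 Hdp Hwp. apply RInt_mult_bump_shift_approx; auto.
    intros z Hz. left. apply Hwp. replace (z + p - p) with z by ring. solve_abs. }
  assert (Ja := Happrox (x0 - t) da ltac:(unfold c; lra) ltac:(unfold d; lra) Ea Hwa).
  assert (Jb := Happrox (x0 + t) db ltac:(unfold c; lra) ltac:(unfold d; lra) Eb Hwb).
  assert (Jm := Happrox x0 dm ltac:(unfold c; lra) ltac:(unfold d; lra) Em Hwm).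
  assert (Hint := Hweak e He0 Et'). fold c d in Hint.
  rewrite (RInt_Rext _ (fun y => w y * bump_second_difference e x0 t y)) in Hint
    by (intros; now rewrite Derive_n_tent_2).
  rewrite RInt_mult_bump_second_difference in Hint by (unfold c, d; lra || exact Hwcd).
  assert (HM := bump_mass_pos e He0).
  assert (bump_mass e * (w (x0 + t) + w (x0 - t) - 2 * w x0) <= bump_mass e * eps); [|nra].
  unfold eta in *. solve_abs.
Qed.

(** * Distributional subsolutions *)

Section Distributions.

Variables (a b : Rbar) (f g : R -> R).
Hypothesis f_cont : forall x, in_open_interval a b x -> continuous f x.
Hypothesis gf_cont : forall x, in_open_interval a b x -> continuous (fun t => g (f t)) x.

(* With [A] slightly above [g (f y)], uniform continuity of [g o f] makes the
   quotients of [f - A u^2/2] locally negative on all of [[y - s, y + s]]. *)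
Lemma sym_quot2_sub_uniform : sym_quot2_sub a b f g ->
  forall lo hi, in_open_interval a b lo -> in_open_interval a b hi ->
  forall eps, 0 < eps -> exists s1, 0 < s1 /\
    forall y s, lo <= y - s -> y + s <= hi -> 0 < s < s1 -> sym_quot2 f y s <= g (f y) + eps.
Proof.
  intros Hq lo hi Hlo Hhi eps He.
  assert (HI : forall z, lo <= z <= hi -> in_open_interval a b z)
    by (intros z Hz; now apply (in_open_interval_between a b lo hi)).
  destruct (Heine (fun t => g (f t)) (fun z => lo <= z <= hi) (compact_P3 _ _)
              (fun z Hz => proj2 (continuity_pt_filterlim _ _) (gf_cont z (HI z Hz)))
              (mkposreal (eps / 2) ltac:(lra))) as [del Hdel].
  simpl in Hdel.
  exists del. split; [apply cond_pos|].
  intros y s Hy1 Hy2 Hs.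
  set (A := g (f y) + eps / 2).
  enough (sym_quot2 (fun u => f u - A * u ^ 2 / 2) y s <= 0) as Hq'.
  { rewrite sym_quot2_sub_half_sq in Hq' by lra. unfold A in *. lra. }
  apply sym_quot2_nonpos_of_locally_neg; [lra| |].
  - intros z Hz. apply continuous_half_sq_sub, f_cont, HI. lra.
  - intros z Hz.
    assert (Rabs (g (f y) - g (f z)) < eps / 2) by (apply Hdel; try lra; solve_abs).
    assert (Hgap : g (f z) < A) by (unfold A; solve_abs).
    destruct (Hq z (HI z ltac:(lra)) ((A - g (f z)) / 2) ltac:(lra))
      as [d [Hd Hd']].
    exists d. split; [exact Hd|]. intros t Ht.
    rewrite sym_quot2_sub_half_sq by lra. specialize (Hd' t Ht). lra.
Qed.

Lemma sym_quot2_sub_distrib_sub : sym_quot2_sub a b f g -> distrib_sub a b f g.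
Proof.
  intros Hq phi c d Hac Hcd Hdb Hsm Hsupp Hpos.
  assert (HcI : in_open_interval a b c)
    by (split; [exact Hac|]; eapply Rbar_le_lt_trans; [|exact Hdb]; simpl; lra).
  assert (HdI : in_open_interval a b d)
    by (split; [|exact Hdb]; eapply Rbar_lt_le_trans; [exact Hac|]; simpl; lra).
  destruct (in_open_interval_ball _ _ _ HcI) as [rc [Hrc HIc]].
  destruct (in_open_interval_ball _ _ _ HdI) as [rd [Hrd HId]].
  set (s0 := Rmin rc rd / 4).
  assert (Hs0 : 0 < s0) by (unfold s0; generalize (Rmin_pos _ _ Hrc Hrd); lra).
  assert (4 * s0 <= rc /\ 4 * s0 <= rd) as [Hs0c Hs0d]
    by (unfold s0; generalize (Rmin_l rc rd) (Rmin_r rc rd); lra).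
  assert (HI : forall z, c - 4 * s0 <= z <= d + 4 * s0 -> in_open_interval a b z).
  { intros z Hz. apply (in_open_interval_between a b (c - 4 * s0) (d + 4 * s0));
      [apply HIc|apply HId|]; solve_abs. }
  apply (RInt_mult_Derive_n2_le f (fun t => g (f t)) phi c d s0); auto.
  - intros z Hz. apply f_cont, HI. lra.
  - intros z Hz. apply gf_cont, HI. lra.
  - intros eps He.
    destruct (sym_quot2_sub_uniform Hq (c - 2 * s0) (d + 2 * s0)
                (HI (c - 2 * s0) ltac:(lra)) (HI (d + 2 * s0) ltac:(lra)) eps He) as [s1 [Hs1 HQ]].
    exists (Rmin s0 s1). split; [now apply Rmin_pos|].
    intros y s Hy [Hs Hss]. apply Rmin_Rgt in Hss. apply HQ; lra.
Qed.

Lemma distrib_sub_RInt_half_sq_sub : distrib_sub a b f g ->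
  forall (psi : R -> R) (c d c' d' A : R),
  Rbar_lt a c -> c < c' -> c' <= d' -> d' < d -> Rbar_lt d b ->
  smooth psi -> (forall y, y < c' \/ d' < y -> psi y = 0) -> (forall y, 0 <= psi y) ->
  (forall y, c <= y <= d -> g (f y) <= A) ->
  RInt (fun y => (f y - A * y ^ 2 / 2) * Derive_n psi 2 y) c d <= 0.
Proof.
  intros HD psi c d c' d' A Hac Hc Hcd Hd Hdb Hsm Hsupp Hpos HA.
  assert (HI : forall z, c <= z <= d -> in_open_interval a b z).
  { intros z Hz. split.
    - eapply Rbar_lt_le_trans; [exact Hac|]. simpl; lra.
    - eapply Rbar_le_lt_trans; [|exact Hdb]. simpl; lra. }
  assert (Hpsi : forall n x, continuous (Derive_n psi n) x)
    by (intros; now apply smooth_Derive_n_continuous).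
  assert (Ex : forall G, (forall z, c <= z <= d -> continuous G z) -> ex_RInt G c d)
    by (intros G HG; apply (ex_RInt_continuous_on G c d); auto; lra).
  assert (Hf := HD psi c d Hac ltac:(lra) Hdb Hsm
                  ltac:(intros y [Hy|Hy]; apply Hsupp; [left|right]; lra) Hpos).
  assert (Hgf : RInt (fun t => g (f t) * psi t) c d <= A * RInt psi c d).
  { rewrite <- RInt_Rmult_l by (apply Ex; intros; apply (Hpsi 0%nat)).
    apply RInt_le; [lra|apply Ex..|].
    - intros z Hz. apply (continuous_mult (fun t => g (f t)) psi);
        [now apply gf_cont, HI|apply (Hpsi 0%nat)].
    - intros z Hz. apply (continuous_mult (fun _ => A) psi);
        [apply continuous_const|apply (Hpsi 0%nat)].
    - intros y Hy. apply Rmult_le_compat_r; [apply Hpos|apply HA; lra]. }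
  rewrite (RInt_eq_RInt_half_sq_Derive_n2 psi c d c' d') in Hgf by assumption.
  rewrite (RInt_Rext _ (fun y => f y * Derive_n psi 2 y - A * (y ^ 2 / 2 * Derive_n psi 2 y)))
    by (intros; field).
  assert (Hsq : forall z, continuous (fun y => y ^ 2 / 2 * Derive_n psi 2 y) z).
  { intros z. apply (continuous_mult (fun y => y ^ 2 / 2)); [|apply Hpsi].
    apply (ex_derive_continuous (fun y => y ^ 2 / 2)). auto_derive. exact I. }
  rewrite RInt_Rminus, RInt_Rmult_l; [lra|apply Ex; auto|..].
  - apply Ex. intros z Hz. apply (continuous_mult f); [now apply f_cont, HI|apply Hpsi].
  - apply ex_RInt_Rmult_l, Ex; auto.
Qed.

(* The weak inequality for [f - A u^2/2] against [tent e x0 t] makes its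
   second difference at [x0] nonpositive. *)
Lemma distrib_sub_sym_quot2_sub : distrib_sub a b f g -> sym_quot2_sub a b f g.
Proof.
  intros HD x0 Hx0 eps He.
  destruct (continuous_eps_delta _ x0 (gf_cont x0 Hx0) (eps / 2) ltac:(lra)) as [d1 [Hd1 Hgf]].
  destruct (in_open_interval_ball _ _ _ Hx0) as [r [Hr HI]].
  exists (Rmin d1 r / 2). split; [generalize (Rmin_pos _ _ Hd1 Hr); lra|].
  intros t Ht.
  assert (t < d1 / 2 /\ t < r / 2) as [Htd Htr] by (generalize (Rmin_l d1 r) (Rmin_r d1 r); lra).
  set (A := g (f x0) + eps / 2).
  set (w := fun u => f u - A * u ^ 2 / 2).
  enough (w (x0 + t) + w (x0 - t) - 2 * w x0 <= 0) as Hw.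
  { assert (Hq : sym_quot2 w x0 t <= 0).
    { unfold sym_quot2, Rdiv. apply Rmult_le_0_r; [exact Hw|].
      left. apply Rinv_0_lt_compat, pow_lt. lra. }
    unfold w in Hq. rewrite sym_quot2_sub_half_sq in Hq by lra. unfold A in Hq. lra. }
  apply second_difference_nonpos_of_tent; [lra| |].
  - intros z Hz. apply continuous_half_sq_sub, f_cont, HI. solve_abs.
  - intros e He0 Het.
    apply (distrib_sub_RInt_half_sq_sub HD (tent e x0 t) _ _ (x0 - t - e) (x0 + t + e)).
    + apply (HI (x0 - t - 2 * e)). solve_abs.
    + lra.
    + lra.
    + lra.
    + apply (HI (x0 + t + 2 * e)). solve_abs.
    + now apply smooth_tent.
    + intros y Hy. apply tent_outside; [exact He0|lra|exact Hy].
    + intros y. apply tent_nonneg; [exact He0|lra].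
    + intros y Hy. assert (Rabs (g (f y) - g (f x0)) < eps / 2) by (apply Hgf; solve_abs).
      unfold A. solve_abs.
Qed.

End Distributions.

Theorem propositionA3 (a b : Rbar) (f g : R -> R) :
  Rbar_lt a b ->
  (forall x, in_open_interval a b x -> continuous f x) ->
  (exists m : R, forall x, in_open_interval a b x -> m <= f x) ->
  (forall y, image_on a b f y ->
     filterlim g (within (image_on a b f) (locally y)) (locally (g y))) ->
  (viscosity_sub a b f g <-> distrib_sub a b f g) /\
  (distrib_sub a b f g <-> symD2_sub a b f g).
Proof.
  intros _ Hf _ Hg.
  assert (Hgf := fun x => continuous_comp_image a b f g x Hf Hg).
  assert (Hvisc : viscosity_sub a b f g <-> sym_quot2_sub a b f g).
  { split; [apply viscosity_sub_sym_quot2_sub|apply sym_quot2_sub_viscosity_sub]; assumption. }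
  assert (Hdistr : distrib_sub a b f g <-> sym_quot2_sub a b f g).
  { split; [apply distrib_sub_sym_quot2_sub|apply sym_quot2_sub_distrib_sub]; assumption. }
  rewrite symD2_sub_iff, Hvisc, Hdistr. tauto.
Qed.
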